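(* Let $\mathcal{J}$ be an ideal on $\omega$ which is good. Then $\min\{\mathrm{cov}^{+}_{h}(\mathcal{J}),\mathfrak{b}\}\leq\mathfrak{a}(\mathcal{J})$.
   Context: An ideal on a countable set $X$ is a family of subsets of $X$ closed under subsets and finite unions, containing all finite sets and not containing $X$. $\mathcal{J}^{+}=\mathcal{P}(\omega)\setminus\mathcal{J}$ denotes the $\mathcal{J}$-positive sets. For $X\in\mathcal{J}^+$, $\mathcal{J}|_X=\{A\subseteq X: A\in\mathcal{J}\}$, an ideal on $X$. $\mathfrak{a}(\mathcal{J})$ is the smallest size of an uncountable family $\mathcal{A}\subseteq\mathcal{J}^{+}$ which is maximal with respect to the property that $A\cap B\in\mathcal{J}$ for all distinct $A,B\in\mathcal{A}$. $\mathrm{cov}^{+}(\mathcal{J})=\min\{|\mathcal{F}|:\mathcal{F}\subseteq\mathcal{J}$ and for every $X\in\mathcal{J}^{+}$ there is $F\in\mathcal{F}$ with $|X\cap F|=\omega\}$, and $\mathrm{cov}^{+}_{h}(\mathcal{J})=\min\{\mathrm{cov}^{+}(\mathcal{J}|_{X}):X\in\mathcal{J}^{+}\}$. $\mathfrak{b}$ is the least size of a family in $\omega^\omega$ unbounded with respect to eventual domination $\leq^*$. $\mathcal{J}$ is called good if every uncountable family $\mathcal{F}\subseteq\mathcal{J}^{+}$ has a subfamily $\{B_{n}:n\in\omega\}\subseteq\mathcal{F}$ such that for every $f\in\omega^{\omega}$ there is a sequence $\{C_{n}:n\in\omega\}\subseteq\mathcal{J}$ with $C_{n}\subseteq B_{n}\setminus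 f(n)$ for every $n$ such that $\bigcup_{n}C_{n}\in\mathcal{J}^{+}$. *)

From mathcomp Require Import all_boot all_classical.
Set Implicit Arguments. Unset Strict Implicit. Unset Printing Implicit Defensive.
Local Open Scope classical_set_scope.
Local Open Scope card_scope.

Definition is_ideal (J : set (set nat)) : Prop :=
  (forall A B, J B -> A `<=` B -> J A) /\
  (forall A B, J A -> J B -> J (A `|` B)) /\
  (forall A, finite_set A -> J A) /\
  ~ J setT.

Definition Jpos (J : set (set nat)) (X : set nat) : Prop := ~ J X.

Definition J_mad (J : set (set nat)) (A : set (set nat)) : Prop :=
  (forall X, A X -> Jpos J X) /\
  (forall X Y, A X -> A Y -> X <> Y -> J (X `&` Y)) /\
  (forall X, Jpos J X -> exists2 Y, A Y & Jpos J (X `&` Y)).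

(* F witnesses cov^+(J|_X): F is a subfamily of J|_X and meets every
   J|_X-positive set (a subset of X not in J) in an infinite set. *)
Definition cov_plus_witness (J : set (set nat)) (X : set nat)
  (F : set (set nat)) : Prop :=
  (forall G, F G -> G `<=` X /\ J G) /\
  (forall Y, Y `<=` X -> Jpos J Y -> exists2 G, F G & infinite_set (Y `&` G)).

Definition le_star (f g : nat -> nat) : Prop :=
  exists N, forall n, (N <= n)%N -> (f n <= g n)%N.

Definition unbounded_family (D : set (nat -> nat)) : Prop :=
  ~ exists g, forall f, D f -> le_star f g.

Definition good (J : set (set nat)) : Prop :=
  forall F : set (set nat), (forall X, F X -> Jpos J X) -> ~ countable F ->
  exists B : nat -> set nat, injective B /\ (forall n, F (B n)) /\
    forall f : nat -> nat, exists C : nat -> set nat,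
      (forall n, J (C n)) /\
      (forall n, C n `<=` [set k | B n k /\ (f n <= k)%N]) /\
      Jpos J (\bigcup_n C n).

From mathcomp Require Import all_boot all_classical.
Set Implicit Arguments. Unset Strict Implicit. Unset Printing Implicit Defensive.
Local Open Scope classical_set_scope.
Local Open Scope card_scope.

(* Either some a in A has a cov^+ witness for J|_a of size |A|, namely the
   traces on a of the other members of A; or every a in A contains a
   J-positive set Y_a almost disjoint from all other members of A.  In the
   second case goodness, applied to the uncountable family of the Y_a, yields
   a sequence B_n = Y_(a_n); for b in A the function n |-> max (B_n ∩ b) is
   eventually defined, and these |A| functions are unbounded: a bound g gives
   sets C_n ⊆ B_n \ g(n) with J-positive union, which by maximality meets
   some b in A positively, although it meets b only in finitely many C_n. *)

Lemma finite_set_nat_bounded (S : set nat) :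
  finite_set S -> exists N, S `<=` `I_N.
Proof.
move=> /finite_seqP[s ->]; elim: s => [|x s [N sN]]; first by exists 0%N.
exists (maxn x.+1 N) => k /=; rewrite inE => /orP[/eqP ->|/sN kN].
  by rewrite /= leq_max leqnn.
by rewrite /= leq_max kN orbT.
Qed.

Lemma bound_of_finite_choice (I : Type) (S : I -> set nat) :
  exists h : I -> nat, forall i, finite_set (S i) -> S i `<=` `I_(h i).
Proof.
suff [h hS] : {h : I -> nat & forall i, finite_set (S i) -> S i `<=` `I_(h i)}.
  by exists h.
apply: (@choice _ _ (fun i N => finite_set (S i) -> S i `<=` `I_N)) => i.
have [/finite_set_nat_bounded[N SN]|infS] := EM (finite_set (S i)).
  by exists N.
by exists 0%N => /infS.
Qed.

Lemma injective_eventually_neq (T : Type) (B : nat -> T) (Z : T) :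
  injective B -> exists M, forall n, (M <= n)%N -> B n <> Z.
Proof.
move=> Binj; have [[m BmZ]|noZ] := EM (exists m, B m = Z).
  exists m.+1 => n mn BnZ.
  by move: mn; rewrite (Binj n m (etrans BnZ (esym BmZ))) ltnn.
by exists 0%N => n _ BnZ; apply: noZ; exists n.
Qed.

Definition trace_family (A : set (set nat)) (a : set nat) : set (set nat) :=
  (fun b => b `&` a) @` (A `\ a).

Lemma trace_family_card_le (A : set (set nat)) (a : set nat) :
  trace_family A a #<= A.
Proof. exact: card_le_trans (card_image_le _ _) (card_le_setD _ _). Qed.

Definition isolated_subset (J A : set (set nat)) (a Y : set nat) : Prop :=
  [/\ Y `<=` a, Jpos J Y & forall b, A b -> b <> a -> finite_set (Y `&` b)].

Section MadFamily.
Variables (J A : set (set nat)).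
Hypotheses (Jid : is_ideal J) (Amad : J_mad J A).

Lemma ideal_bigcup_lt (C : nat -> set nat) (M : nat) :
  (forall n, J (C n)) -> J (\bigcup_(n < M) C n).
Proof.
have [Jsub [JU [Jfin _]]] := Jid; move=> CJ; elim: M => [|M IH].
  by rewrite II0 bigcup_set0; exact/Jfin/finite_set0.
by rewrite IIS bigcup_setU bigcup_set1; exact: JU.
Qed.

Lemma trace_family_sub (a : set nat) (G : set nat) :
  A a -> trace_family A a G -> G `<=` a /\ J G.
Proof.
have [_ [Aad _]] := Amad.
move=> Aa [b [Ab ba] <-]; split; first by move=> k [].
by apply: Aad => // eba; apply: ba; rewrite eba.
Qed.

Lemma isolated_subset_of_not_witness (a : set nat) :
  A a -> ~ cov_plus_witness J a (trace_family A a) ->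
  exists Y, isolated_subset J A a Y.
Proof.
move=> Aa; apply: contra_notP => noY; split=> [G /(trace_family_sub Aa)//|].
move=> Y Ya Ypos; apply: contrapT => noG; apply: noY; exists Y.
split=> // b Ab ba; apply: contrapT => infYb; apply: noG.
exists (b `&` a); first by exists b.
by apply: sub_infinite_set infYb => k [Yk bk]; split=> //; split=> //; apply: Ya.
Qed.

Section IsolatedSubsets.
Variable Y : set nat -> set nat.
Hypothesis Yiso : forall a, A a -> isolated_subset J A a (Y a).

Lemma isolated_subset_inj : {in A &, injective Y}.
Proof.
have [_ [_ [Jfin _]]] := Jid.
move=> a b; rewrite !inE => Aa Ab Yab; apply: contrapT => ab.
have [_ Yapos Yafin] := Yiso Aa; have [Ybb _ _] := Yiso Ab.
apply/Yapos/Jfin; apply: sub_finite_set (Yafin b Ab (nesym ab)) => k Yak.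
by split=> //; apply: Ybb; rewrite -Yab.
Qed.

Lemma isolated_traces_eventually_finite (B : nat -> set nat) (b : set nat) :
  injective B -> (forall n, (Y @` A) (B n)) -> A b ->
  exists M, forall n, (M <= n)%N -> finite_set (B n `&` b).
Proof.
move=> Binj BY Ab; have [M BnYb] := injective_eventually_neq (Y b) Binj.
exists M => n /BnYb; have [a Aa <-] := BY n => Yab.
have [_ _ Yafin] := Yiso Aa; apply: Yafin Ab _ => ba.
by apply: Yab; rewrite ba.
Qed.

End IsolatedSubsets.

Lemma bounding_family_unbounded (B : nat -> set nat)
    (f : set nat -> nat -> nat) :
  (forall g : nat -> nat, exists C : nat -> set nat,
      (forall n, J (C n)) /\
      (forall n, C n `<=` [set k | B n k /\ (g n <= k)%N]) /\
      Jpos J (\bigcup_n C n)) ->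
  (forall b, A b -> exists M, forall n, (M <= n)%N -> B n `&` b `<=` `I_(f b n)) ->
  unbounded_family (f @` A).
Proof.
have [Jsub _] := Jid; have [_ [_ Amax]] := Amad.
move=> Bgood fbound [g gdom].
have [C [CJ [CB Cpos]]] := Bgood g.
have [b Ab] := Amax _ Cpos; apply.
have [N fg] := gdom (f b) (ex_intro2 _ _ b Ab erefl).
have [M Bbf] := fbound b Ab.
apply: Jsub (ideal_bigcup_lt (maxn M N) CJ) _ => k [[n _ Cnk] bk].
exists n => //=; rewrite ltnNge; apply/negP => MNn.
have [Bnk gnk] := CB n k Cnk.
have kf : (k < f b n)%N := Bbf n (leq_trans (leq_maxl _ _) MNn) k (conj Bnk bk).
have fg_n : (f b n <= g n)%N := fg n (leq_trans (leq_maxr _ _) MNn).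
by have := leq_trans kf (leq_trans fg_n gnk); rewrite ltnn.
Qed.

End MadFamily.

Theorem mainTheorem1 (J : set (set nat)) :
  is_ideal J -> good J ->
  forall A : set (set nat), J_mad J A -> ~ countable A ->
    (exists X F, Jpos J X /\ cov_plus_witness J X F /\ F #<= A) \/
    (exists D : set (nat -> nat), unbounded_family D /\ D #<= A).
Proof.
move=> Jid Jgood A Amad Aunc.
have [[a [Aa Wa]]|noW] :=
  EM (exists a, A a /\ cov_plus_witness J a (trace_family A a)).
  have [Apos _] := Amad.
  left; exists a, (trace_family A a).
  by split; [exact: Apos | split=> //; exact: trace_family_card_le].
have /choice[Y Yiso] : forall a, exists Y, A a -> isolated_subset J A a Y.
  move=> a; have [Aa|nAa] := EM (A a); last by exists set0 => /nAa.
  have aW : ~ cov_plus_witness J a (trace_family A a).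
    by move=> Wa; apply: noW; exists a.
  have [Y aY] := isolated_subset_of_not_witness Amad Aa aW.
  by exists Y.
have YA_unc : ~ countable (Y @` A).
  have /card_eqPle[_ AY] := inj_card_eq (isolated_subset_inj Jid Yiso).
  by move=> /(card_le_trans AY).
have YA_pos : forall X, (Y @` A) X -> Jpos J X by move=> _ [a /Yiso[_ Yapos _] <-].
have [B [Binj [BY Bgood]]] := Jgood _ YA_pos YA_unc.
have [h hbound] :=
  bound_of_finite_choice (fun bn : set nat * nat => B bn.2 `&` bn.1).
right; exists ((fun b n => h (b, n)) @` A); split; last exact: card_image_le.
apply: (bounding_family_unbounded Jid Amad Bgood) => b Ab.
have [M BbM] := isolated_traces_eventually_finite Yiso Binj BY Ab.
by exists M => n /BbM /(hbound (b, n)).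
Qed.
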